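(* Let $X$ be a compact space and let $Y$ be a zero-dimensional closed subspace of $X$. If $F$ is a closed subset of $C(X,[0,1])$ such that $f(Y)$ is infinite for every $f\in F$, then $F$ is a $Z$-set in $C(X,[0,1])$.
   Context: Compact spaces are Hausdorff. $C(X,[0,1])$ is the space of continuous maps $X\to[0,1]$ with the sup-metric topology. For topological spaces $K,T$, $C(K,T)$ denotes the space of continuous maps $K\to T$ with the compact-open topology. A closed subset $F$ of a topological space $T$ is a $Z$-set in $T$ if for every compact (Hausdorff) space $K$ the set $C(K,T\setminus F)$ is dense in $C(K,T)$. *)

From HB Require Import structures.
From mathcomp Require Import all_boot all_order all_algebra.
From mathcomp Require Import all_classical all_reals all_analysis.

Import Order.TTheory GRing.Theory Num.Theory.
Import numFieldNormedType.Exports.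
Local Open Scope classical_set_scope.
Local Open Scope ring_scope.

Definition zero_dim_space (T : topologicalType) : Prop :=
  forall (x : T) (U : set T), open U -> U x ->
    exists V : set T, [/\ clopen V, V x & V `<=` U].

(* A subspace Y of X is zero-dimensional if Y, with the subspace topology
   (the initial topology of the inclusion, i.e. the type [set_type Y]),
   is zero-dimensional. *)
Definition zero_dim_subspace {X : topologicalType} (Y : set X) : Prop :=
  zero_dim_space (set_type Y).

(* The underlying set of C(X,[0,1]) inside the space of all functions X -> R
   equipped with the topology of uniform convergence (= sup-metric topology
   on bounded functions). *)
Definition CX01_set (R : realType) (X : topologicalType) : set {uniform X -> R} :=
  [set f : {uniform X -> R} |
     continuous (f : X -> R) /\ forall x : X, 0 <= (f : X -> R) x <= 1].

Definition CX01 (R : realType) (X : topologicalType) : topologicalType :=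
  set_type (CX01_set R X).

Definition Cmaps_set (K T : topologicalType) : set {compact-open, K -> T} :=
  [set g : {compact-open, K -> T} | continuous (g : K -> T)].

Definition Cmaps (K T : topologicalType) : topologicalType :=
  set_type (Cmaps_set K T).

Definition Z_set {T : topologicalType} (F : set T) : Prop :=
  closed F /\
  forall K : topologicalType, compact [set: K] -> hausdorff_space K ->
    dense [set g : Cmaps K T | forall k : K, ~ F (sval g k)].

From HB Require Import structures.
From mathcomp Require Import all_boot all_order all_algebra.
From mathcomp Require Import all_classical all_reals all_analysis.
From mathcomp Require Import ring lra.
Import Order.TTheory GRing.Theory Num.Theory.
Import numFieldNormedType.Exports.
Local Open Scope classical_set_scope.
Local Open Scope ring_scope.

(* A compact-open neighbourhood of a continuous g : K -> C(X,[0,1]) contains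
   a uniform tube around g, and a map h with h k (Y) finite for all k avoids F,
   so it suffices to approximate g uniformly by such maps.  The family (g k) is
   equicontinuous; by zero-dimensionality and compactness Y is covered by
   finitely many relatively clopen pieces A_i around points y_i on which no g k
   oscillates much.  With Urysohn functions phi_i equal to 1 on A_i and 0 on
   Y \ A_i, supported where every g k stays close to g k y_i, let h k be the
   nested convex combination
     phi_1 g_k(y_1) + (1 - phi_1) (phi_2 g_k(y_2) + ... + (1 - phi_n) g_k),
   which on Y only takes the values g_k(y_i). *)

Section Blend.
Context {R : realDomainType} {T : Type} {I : eqType} (phi : I -> T -> R).
Implicit Types (s : seq I) (a : I -> R) (f : T -> R) (x : T) (i : I).

Definition blend (a : I -> R) (f : T -> R) (s : seq I) (x : T) : R :=
  foldr (fun i b => phi i x * a i + (1 - phi i x) * b) (f x) s.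

Lemma blendB a a' f f' s x :
  blend a f s x - blend a' f' s x = blend (a \- a') (f \- f') s x.
Proof. by elim: s => //= i s <-; ring. Qed.

Lemma blend_itv a f (lo hi : R) s x :
  (forall i, i \in s -> 0 <= phi i x <= 1) ->
  (forall i, i \in s -> phi i x != 0 -> lo <= a i <= hi) ->
  lo <= f x <= hi -> lo <= blend a f s x <= hi.
Proof.
move=> phi01 a_itv fx_itv; elim: s phi01 a_itv => //= i s IH phi01 a_itv.
have /andP[b_lo b_hi] : lo <= blend a f s x <= hi.
  by apply: IH => j js; [apply: phi01 | apply: a_itv]; rewrite inE js orbT.
have /andP[p0 p1] := phi01 i (mem_head i s).
have [->|/(a_itv i (mem_head i s))/andP[a_lo a_hi]] := eqVneq (phi i x) 0.
  by rewrite mul0r add0r subr0 mul1r b_lo b_hi.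
apply/andP; split; nra.
Qed.

Lemma blend_indicator a f s x :
  (forall i, i \in s -> phi i x = 0 \/ phi i x = 1) ->
  (exists2 i, i \in s & phi i x = 1) -> exists2 i, i \in s & blend a f s x = a i.
Proof.
elim: s => [_ [//]|i s IH] /= phi01 [j js phij1].
have [phii0|phii1] := phi01 i (mem_head i s); last first.
  by exists i; rewrite ?mem_head // phii1 mul1r subrr mul0r addr0.
have phi01s : forall k, k \in s -> phi k x = 0 \/ phi k x = 1.
  by move=> k ks; apply: phi01; rewrite inE ks orbT.
have hit : exists2 k, k \in s & phi k x = 1.
  exists j => //; move: js; rewrite inE => /orP[/eqP ji|//].
  by move: phij1; rewrite ji phii0 => /eqP; rewrite eq_sym oner_eq0.
have [k ks ->] := IH phi01s hit.
by exists k; rewrite ?inE ?ks ?orbT // phii0 mul0r add0r subr0 mul1r.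
Qed.

End Blend.

Lemma continuous_blend {R : realType} {T : topologicalType} {I : eqType}
    (phi : I -> T -> R) (a : I -> R) (f : T -> R) (s : seq I) :
  (forall i, continuous (phi i)) -> continuous f -> continuous (blend phi a f s).
Proof.
move=> cphi cf; elim: s => //= i s IH x.
apply: cvgD; apply: cvgM; [exact: cphi | exact: cvg_cst | | exact: IH].
by apply: cvgB; [exact: cvg_cst | exact: cphi].
Qed.

Lemma compact_finite_subcover {T : topologicalType} {I : eqType}
    (A : set T) (P : I -> set T) :
  compact A -> (forall x, A x -> exists i, nbhs x (P i)) ->
  exists s : seq I, forall x, A x -> exists2 i, i \in s & P i x.
Proof.
move=> /compact_near_coveringP cA AP.
pose F := filter_from setT
  (fun s0 : seq I => [set s : seq I | {subset s0 <= s}]).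
have FF : Filter F.
  apply: filter_from_filter; first by exists [::].
  move=> s0 s1 _ _; exists (s0 ++ s1) => // s /= s01s.
  by split=> i i_s; apply: s01s; rewrite mem_cat i_s ?orbT.
have [|s0 _ s0A] := cA _ F (fun s x => exists2 i, i \in s & P i x) FF.
  move=> x /AP[i Pi]; exists (P i, [set s : seq I | i \in s]); first split=> //.
    by exists [:: i] => // s; apply; rewrite mem_head.
  by case=> x' s [Px' i_s]; exists i.
by exists s0 => x /s0A; apply.
Qed.

Lemma equicontinuous_compact_family {R : realType} {K X : topologicalType}
    (G : K -> X -> R) :
  compact [set: K] -> (forall k, continuous (G k)) ->
  (forall k (e : R), 0 < e -> \forall k' \near k, forall x, `|G k x - G k' x| < e) ->
  forall x0 (e : R), 0 < e -> \forall x \near x0, forall k, `|G k x0 - G k x| < e.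
Proof.
move=> /compact_near_coveringP cK cG uG x0 e e0.
have e30 : 0 < e / 3 by rewrite divr_gt0.
apply: filterS (cK _ (nbhs x0) (fun x k => `|G k x0 - G k x| < e) _ _).
  by move=> x xP k; exact: xP.
move=> k _.
exists ([set k' | forall x, `|G k x - G k' x| < e / 3],
        [set x | `|G k x0 - G k x| < e / 3]); first split.
- exact: uG.
- exact: (@cvgr_dist_lt _ R^o _ _ _ _ _ (cG k x0)).
case=> k' x /= [kk' kx]; have := kk' x0; have := kk' x; move: kx.
rewrite !ltr_norml => /andP[? ?] /andP[? ?] /andP[? ?].
by apply/andP; split; lra.
Qed.

Lemma zero_dim_subspace_clopen {X : topologicalType} {Y : set X} {y : X}
    {U : set X} :
  closed Y -> zero_dim_subspace Y -> Y y -> nbhs y U ->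
  exists A : set X, [/\ A y, A `<=` U `&` Y, closed A & closed (Y `\` A)].
Proof.
move=> cY zdY Yy yU.
have [|V [[[W oW WV] cV] Vy VU]] :=
  zdY (exist _ y (mem_set Yy)) (sval @^-1` U°) _ yU.
  by exists U°; first exact: open_interior.
have [C oC CV] : open (~` V) by rewrite openC.
have WC x : Y x -> (W x <-> ~ C x).
  move=> Yx; have := congr1 (fun S => S (exist _ x (mem_set Yx))) CV.
  have := congr1 (fun S => S (exist _ x (mem_set Yx))) WV => /= -> ->.
  by split=> [Vx /(_ Vx)|/contrapT].
exists (Y `&` W); split.
- by split; last by rewrite -WV in Vy.
- move=> x [Yx Wx]; split=> //; apply: interior_subset.
  by apply: (VU (exist _ x (mem_set Yx))); rewrite -WV.
- have -> : Y `&` W = Y `&` ~` C.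
    by apply/seteqP; split=> x [Yx]; split=> //; apply/(WC x Yx).
  by apply: closedI => //; exact: open_closedC.
- rewrite setDIr setDv set0U.
  by apply: closedI => //; exact: open_closedC.
Qed.

Lemma zero_dim_bump {R : realType} {X : topologicalType} (Y : set X) (y : X)
    (U : set X) :
  compact [set: X] -> hausdorff_space X -> closed Y -> zero_dim_subspace Y ->
  Y y -> nbhs y U ->
  exists phi : X -> R, [/\ continuous phi, forall x, 0 <= phi x <= 1, phi y = 1,
    forall x, Y x -> phi x = 0 \/ phi x = 1 & forall x, phi x != 0 -> U x].
Proof.
move=> cX hX cY zdY Yy /nbhs_interior yU.
have [A [Ay AUY cA cYA]] := zero_dim_subspace_clopen cY zdY Yy yU.
pose B := (Y `\` A) `|` ~` U°.
have cB : closed B by apply: closedU => //; exact/open_closedC/open_interior.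
have AB0 : B `&` A = set0.
  by rewrite -subset0 => x [[[_ nAx]|nUx] Ax]; [|apply: nUx]; case: (AUY x Ax).
have [phi [cphi phi0 phi1 phi01]] :=
  @urysohn_ext_itv X R (compact_normal hX cX) B A 0 1 cB cA AB0 ltr01.
have phiA x : A x -> phi x = 1 by move=> Ax; apply: phi1; exists x.
have phiB x : B x -> phi x = 0 by move=> Bx; apply: phi0; exists x.
exists phi; split => //.
- by move=> x; have /= := phi01 (phi x) (imageT _ x); rewrite in_itv.
- exact: phiA.
- move=> x Yx; have [Ax|nAx] := pselect (A x); first by right; exact: phiA.
  by left; apply: phiB; left.
- move=> x /eqP phix; apply: contrapT => nUx.
  by apply/phix/phiB; right=> /interior_subset.
Qed.

Section UniformTopologyCX01.
Context {R : realType} {X : topologicalType}.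

Lemma nbhs_CX01P (f : CX01 R X) (O : set (CX01 R X)) :
  nbhs f O <-> exists2 e : R, 0 < e &
    [set g : CX01 R X | forall x, `|sval f x - sval g x| < e] `<=` O.
Proof.
split.
  rewrite nbhsE => -[_ [[U oU <-] Uf] UO].
  have /uniform_nbhs[E [+ EU]] := open_nbhs_nbhs (conj oU Uf).
  rewrite -entourage_ballE => -[e e0 eE]; exists e => // g fg.
  by apply/UO/EU => x _; apply: eE; exact: fg.
move=> [e e0 eO].
have : nbhs (sval f : {uniform X -> R})
    [set h : {uniform X -> R} | forall x, `|sval f x - h x| < e].
  apply/uniform_nbhs; exists [set xy | ball xy.1 e xy.2]; split.
    exact: (entourage_ball _ (PosNum e0)).
  by move=> h fh x; exact: fh.
rewrite !nbhsE => -[V [oV Vf] VS]; exists (sval @^-1` V).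
  by split=> //; exists V.
by move=> g /VS; exact: eO.
Qed.

Lemma continuous_CX01P {K : topologicalType} (g : K -> CX01 R X) :
  continuous g <-> forall k (e : R), 0 < e ->
    \forall k' \near k, forall x, `|sval (g k) x - sval (g k') x| < e.
Proof.
split=> [cg k e e0 | gP k O /nbhs_CX01P[e e0 eO]].
  have : nbhs (g k) [set g' | forall x, `|sval (g k) x - sval g' x| < e].
    by apply/nbhs_CX01P; exists e.
  exact: cg.
by apply: filterS (gP k e e0) => k' /eO.
Qed.

Lemma compact_open_nbhs_uniform {K : topologicalType} (g : K -> CX01 R X)
    (W : set {compact-open, K -> CX01 R X}) :
  continuous g -> nbhs (g : {compact-open, K -> CX01 R X}) W ->
  exists2 d : R, 0 < d & forall h : K -> CX01 R X,
    (forall k x, `|sval (g k) x - sval (h k) x| < d) -> W h.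
Proof.
move=> /continuous_CX01P cg gW.
pose tube d := [set h : {compact-open, K -> CX01 R X} |
  forall k x, `|sval (g k) x - sval (h k) x| < d].
pose F := filter_from [set d : R | 0 < d] tube.
have FF : Filter F.
  apply: filter_from_filter; first by exists 1; rewrite /= ltr01.
  move=> d d' d0 d'0; exists (Num.min d d'); first by rewrite /= lt_min d0 d'0.
  by move=> h /= hd; split=> k x; have := hd k x; rewrite lt_min => /andP[].
suff /(_ W gW)[d d0 dW] : F --> (g : {compact-open, K -> CX01 R X}) by exists d.
apply/compact_open_cvgP => C O /compact_near_coveringP cC oO gCO.
apply: filterS (cC _ F (fun h k => O (h k)) FF _) => [h hCO _ [k Ck <-]|k Ck].
  exact: hCO.
have /nbhs_CX01P[e e0 eO] : nbhs (g k) O.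
  by apply: open_nbhs_nbhs; split=> //; apply: gCO; exists k.
have e20 : 0 < e / 2 by rewrite divr_gt0.
exists ([set k' | forall x, `|sval (g k) x - sval (g k') x| < e / 2],
        tube (e / 2)).
  by split; [exact: cg | exists (e / 2)].
case=> k' h [gkk' hk'] /=; apply: eO => x /=.
rewrite (le_lt_trans (ler_distD (sval (g k') x) _ _)) // (splitr e).
by rewrite ltrD // hk'.
Qed.

End UniformTopologyCX01.

Lemma zero_dim_bump_cover {R : realType} {X : topologicalType} (Y : set X)
    (U : X -> set X) :
  compact [set: X] -> hausdorff_space X -> closed Y -> zero_dim_subspace Y ->
  (forall y, Y y -> nbhs y (U y)) ->
  exists (s : seq (set_type Y)) (phi : set_type Y -> X -> R),
    [/\ forall i, continuous (phi i), forall i x, 0 <= phi i x <= 1,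
        forall i y, Y y -> phi i y = 0 \/ phi i y = 1,
        forall i x, phi i x != 0 -> U (sval i) x
      & forall y, Y y -> exists2 i, i \in s & phi i y = 1].
Proof.
move=> cX hX cY zdY nU.
have bump (i : set_type Y) : exists phi : X -> R,
    [/\ continuous phi, forall x, 0 <= phi x <= 1, phi (sval i) = 1,
        forall y, Y y -> phi y = 0 \/ phi y = 1 &
        forall x, phi x != 0 -> U (sval i) x].
  by case: i => y /[dup] /set_mem Yy ?; exact: zero_dim_bump (nU y Yy).
have [phi phiP] := choice bump.
have phiY i y : Y y -> phi i y = 0 \/ phi i y = 1.
  by case: (phiP i) => _ _ _ /(_ y).
have [|s sY] := compact_finite_subcover Y (fun i y => 0 < phi i y)
    (subclosed_compact cY cX (subsetT Y)) _.
  move=> y Yy; pose i := exist _ y (mem_set Yy) : set_type Y; exists i.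
  have [cphi _ phiy _ _] := phiP i.
  by apply: (cvgr_gt _ (cphi y)); rewrite [phi i y]phiy ltr01.
exists s, phi; split; try by move=> i; case: (phiP i).
move=> y Yy; have [i i_s phiy] := sY y Yy; exists i => //.
by case: (phiY i y Yy) phiy => ->; rewrite ?ltxx.
Qed.

Lemma approx_finite_image {R : realType} {X K : topologicalType} (Y : set X)
    (g : K -> CX01 R X) (d : R) :
  compact [set: X] -> hausdorff_space X -> closed Y -> zero_dim_subspace Y ->
  compact [set: K] -> continuous g -> 0 < d ->
  exists2 h : K -> CX01 R X, continuous h &
    (forall k x, `|sval (g k) x - sval (h k) x| < d) /\
    (forall k, finite_set ((sval (h k) : X -> R) @` Y)).
Proof.
move=> cX hX cY zdY cK /continuous_CX01P ug d0.
pose G k x := (sval (g k) : X -> R) x.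
have cG k : continuous (G k) by case: (set_mem (svalP (g k))).
have G01 k x : 0 <= G k x <= 1 by case: (set_mem (svalP (g k))) => _ /(_ x).
have d20 : 0 < d / 2 by rewrite divr_gt0.
have [s [phi [cphi phi01 phiY phiU cover]]] := @zero_dim_bump_cover R X Y
  (fun y => [set x | forall k, `|G k y - G k x| < d / 2]) cX hX cY zdY
  (fun y _ => equicontinuous_compact_family G cK cG ug y _ d20).
pose H k := blend phi (fun i => G k (sval i)) (G k) s.
have H01 k x : 0 <= H k x <= 1.
  by apply: blend_itv => [i _|i _ _|]; [exact: phi01 | exact: G01..].
have GH k x : `|G k x - H k x| <= d / 2.
  rewrite distrC ler_distl; apply: blend_itv => [i _|i _ /phiU /(_ k)|].
  - exact: phi01.
  - by rewrite ltr_distl => /andP[/ltW -> /ltW ->].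
  - by apply/andP; split; lra.
pose h k : CX01 R X := exist _ (H k : {uniform X -> R})
  (mem_set (conj (continuous_blend _ _ _ s cphi (cG k)) (H01 k))).
exists h; last split.
- apply/continuous_CX01P => k e e0.
  have e20 : 0 < e / 2 by rewrite divr_gt0.
  apply: filterS (ug k _ e20) => k' kk' x /=.
  have kk'_itv z : - (e / 2) <= G k z - G k' z <= e / 2.
    by rewrite -ler_norml; apply/ltW/kk'.
  apply: (@le_lt_trans _ _ (e / 2)); last lra.
  rewrite /= /H blendB ler_norml.
  by apply: blend_itv => [i _|i _ _|]; [exact: phi01 | exact: kk'_itv..].
- move=> k x; apply: le_lt_trans (GH k x) _.
  by rewrite ltr_pdivrMr // ltr_pMr // ltr1n.
- move=> k; pose vals (i : set_type Y) := G k (sval i).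
  apply: sub_finite_set (finite_image vals (finite_seq s)) => _ [y Yy <-].
  have [i i_s Hy] := blend_indicator phi vals (G k) s y
    (fun i _ => phiY i y Yy) (cover y Yy).
  by exists i => //; rewrite /= Hy.
Qed.

Theorem lemma4 (R : realType) (X : topologicalType)
  (hXc : compact [set: X]) (hXh : hausdorff_space X)
  (Y : set X) (hYc : closed Y) (hY0 : zero_dim_subspace Y)
  (F : set (CX01 R X)) (hFc : closed F)
  (hFinf : forall f : CX01 R X, F f -> infinite_set ((sval f : X -> R) @` Y)) :
  Z_set F.
Proof.
split=> // K cK _ O [g Og] [W oW OW].
have cg : continuous (sval g : K -> CX01 R X) := set_mem (svalP g).
have Wg : W (sval g) by rewrite -OW in Og.
have [d d0 dW] := compact_open_nbhs_uniform _ _ cg (open_nbhs_nbhs (conj oW Wg)).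
have [h ch [gh hfin]] := approx_finite_image Y _ _ hXc hXh hYc hY0 cK cg d0.
exists (exist _ (h : {compact-open, K -> CX01 R X}) (mem_set ch)); split.
  by rewrite -OW; apply: dW.
by move=> k /hFinf; apply.
Qed.
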